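(* For $z\in\mathbb{R}^d$ define $\|z\|_{1,\text{top-}\alpha\%}:=\|z\odot\texttt{FLT}_\alpha(z)\|_1$. Then $\|\cdot\|_{1,\text{top-}\alpha\%}$ is a norm on $\mathbb{R}^d$.
   Context: The coordinates of $\mathbb{R}^d$ are partitioned into $B$ blocks of sizes $d_1,\dots,d_B$ with $\sum_kd_k=d$; write $z=(z^{(1)},\dots,z^{(B)})$, $z^{(k)}\in\mathbb{R}^{d_k}$. Fix $\alpha\%\in(0,1]$. The top-$\alpha\%$ filter $\texttt{FLT}_\alpha(z)\in\{0,1\}^d$ is defined blockwise: in block $k$ it equals $1$ exactly on a set $S_k$ of $\lceil d_k\cdot\alpha\%\rceil$ indices whose absolute values $|z^{(k)}_i|$ rank within the top-$\alpha\%$ of the block (when several entries have equal absolute value, those with smallest indices are selected first), and $0$ elsewhere. $\odot$ is the entrywise product. *)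

From mathcomp Require Import all_boot all_order all_algebra.
From mathcomp Require Import reals.
Set Implicit Arguments. Unset Strict Implicit. Unset Printing Implicit Defensive.
Import Order.TTheory GRing.Theory Num.Theory.
Local Open Scope ring_scope.

Section TopAlpha.
Variables (R : realType) (d B : nat) (blk : 'I_d -> 'I_B) (a : R).
(* blk i = the block containing coordinate i; a = alpha% in (0,1]. *)

Definition blk_size (k : 'I_B) : nat := #|[pred i | blk i == k]|.

Definition nsel (k : 'I_B) : nat := `|Num.ceil ((blk_size k)%:R * a)|%N.

Definition beats (z : 'rV[R]_d) (j i : 'I_d) : bool :=
  (`|z ord0 i| < `|z ord0 j|) || ((`|z ord0 j| == `|z ord0 i|) && (j < i)%N).

Definition rank_in_blk (z : 'rV[R]_d) (i : 'I_d) : nat :=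
  #|[pred j | (blk j == blk i) && beats z j i]|.

Definition FLT (z : 'rV[R]_d) (i : 'I_d) : bool :=
  (rank_in_blk z i < nsel (blk i))%N.

Definition top_norm (z : 'rV[R]_d) : R :=
  \sum_(i < d) `|z ord0 i * (FLT z i)%:R|.
End TopAlpha.

Definition is_norm (R : realType) (d : nat) (N : 'rV[R]_d -> R) : Prop :=
  [/\ forall x, 0 <= N x,
      forall x, N x = 0 -> x = 0,
      forall (c : R) x, N (c *: x) = `|c| * N x
    & forall x y, N (x + y) <= N x + N y].

(* Within each block, rank_in_blk is a bijection onto {0, ..., d_k - 1}, so the number of
   selected coordinates of a block does not depend on z, and the selected ones dominate the
   others in absolute value.  An exchange argument then shows that, among all index sets of
   a block with at most that many elements, the selected set maximises the sum of |z_i|.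
   Subadditivity follows by comparing the selected set of x + y with those of x and y;
   homogeneity holds because scaling by c <> 0 preserves the ranking; and a vector with
   zero norm vanishes because every block selects at least one coordinate. *)
From mathcomp Require Import all_boot all_order all_algebra.
From mathcomp Require Import reals.
From mathcomp Require Import zify.

Set Implicit Arguments.
Unset Strict Implicit.
Unset Printing Implicit Defensive.
Import Order.TTheory GRing.Theory Num.Theory.
Local Open Scope ring_scope.

Lemma ler_sum_exchange (R : numDomainType) (I : finType) (f : I -> R) (S T : {set I}) :
  (forall i, 0 <= f i) -> (#|S| <= #|T|)%N ->
  (forall i j, i \in T -> j \in S -> j \notin T -> f j <= f i) ->
  \sum_(i in S) f i <= \sum_(i in T) f i.
Proof.
move=> f_ge0 leST dom.
rewrite (big_setID T) [X in _ <= X](big_setID S) /= setIC lerD2l.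
set m := #|T :\: S|; set n := #|S :\: T|.
have le_nm : (n <= m)%N by have := cardsID T S; have := cardsID S T; rewrite setIC; lia.
have [/eqP|n_gt0] := posnP n.
  by rewrite cards_eq0 => /eqP ->; rewrite big_set0; apply: sumr_ge0.
(* Every term of the left sum is below every term of the right one; average over both. *)
have avg : (\sum_(j in S :\: T) f j) * m%:R <= n%:R * \sum_(i in T :\: S) f i.
  have -> : n%:R * \sum_(i in T :\: S) f i = \sum_(j in S :\: T) \sum_(i in T :\: S) f i.
    by rewrite sumr_const mulr_natl.
  rewrite mulr_suml; apply: ler_sum => j; rewrite inE => /andP[jNT jS].
  rewrite mulr_natr -sumr_const; apply: ler_sum => i; rewrite inE => /andP[iNS iT].
  exact: dom.
have m_gt0 : 0 < m%:R :> R by rewrite ltr0n (leq_trans n_gt0 le_nm).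
rewrite -(ler_pM2r m_gt0) (le_trans avg) // mulrC.
by rewrite ler_wpM2l ?sumr_ge0 ?ler_nat.
Qed.

Section RankIn.
Variables (T : finType) (lt : rel T) (A : {pred T}).
Hypotheses (lt_irr : irreflexive lt) (lt_trans : transitive lt)
           (lt_total : forall x y, x != y -> lt x y || lt y x).

Definition rank_in (x : T) : nat := #|[pred y in A | lt y x]|.

Lemma rank_in_lt x y : x \in A -> lt x y -> (rank_in x < rank_in y)%N.
Proof.
move=> Ax lt_xy; apply: proper_card; apply/properP; split.
  by apply/subsetP => z; rewrite !inE => /andP[-> /lt_trans->].
by exists x; rewrite !inE ?Ax ?lt_xy // lt_irr andbF.
Qed.

Lemma rank_in_bound x : x \in A -> (rank_in x < #|A|)%N.
Proof.
move=> Ax; apply: proper_card; apply/properP; split.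
  by apply/subsetP => z; rewrite !inE => /andP[].
by exists x; rewrite // !inE lt_irr andbF.
Qed.

Lemma rank_in_inj : {in A &, injective rank_in}.
Proof.
move=> x y Ax Ay eq_r; apply: contraTeq isT => neq_xy.
by case/orP: (lt_total neq_xy) => [/(rank_in_lt Ax)|/(rank_in_lt Ay)]; rewrite eq_r ltnn.
Qed.

Lemma perm_rank_in_iota : perm_eq [seq rank_in x | x <- enum A] (iota 0 #|A|).
Proof.
have uniq_ranks : uniq [seq rank_in x | x <- enum A].
  by rewrite map_inj_in_uniq ?enum_uniq // => x y; rewrite !mem_enum; apply: rank_in_inj.
have ranks_sub : {subset [seq rank_in x | x <- enum A] <= iota 0 #|A|}.
  by move=> r /mapP[x]; rewrite mem_enum => Ax ->; rewrite mem_iota rank_in_bound.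
apply: uniq_perm; rewrite ?iota_uniq //.
by apply: (uniq_min_size uniq_ranks ranks_sub _).2; rewrite size_map size_iota cardE.
Qed.

End RankIn.

Section Beats.
Variables (R : realType) (d : nat) (z : 'rV[R]_d).

Lemma beats_irr : irreflexive (beats z).
Proof. by move=> i; rewrite /beats ltxx ltnn andbF. Qed.

Lemma beats_trans : transitive (beats z).
Proof.
move=> j i k; rewrite /beats => /orP[h1|/andP[/eqP e1 h1]] /orP[h2|/andP[/eqP e2 h2]].
- by rewrite (lt_trans h2 h1).
- by rewrite -e2 h1.
- by rewrite e1 h2.
- by rewrite e1 e2 eqxx (ltn_trans h1 h2) orbT.
Qed.

Lemma beats_total i j : i != j -> beats z i j || beats z j i.
Proof.
move=> neq_ij; rewrite /beats.
have [//|] := ltP `|z ord0 j| `|z ord0 i|.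
rewrite le_eqVlt => /orP[/eqP ->|->]; last by rewrite orbT.
rewrite eqxx ltxx /=; move: neq_ij; rewrite -val_eqE /=; lia.
Qed.

End Beats.

Lemma beatsZ (R : realType) (d : nat) (z : 'rV[R]_d) (c : R) i j : c != 0 ->
  beats (c *: z) i j = beats z i j.
Proof.
move=> c_neq0; have c_gt0 : 0 < `|c| by rewrite normr_gt0.
by rewrite /beats !mxE !normrM ltr_pM2l // (inj_eq (mulfI (lt0r_neq0 c_gt0))).
Qed.

Section TopSet.
Variables (R : realType) (d B : nat) (blk : 'I_d -> 'I_B) (a : R).

Lemma rank_in_blkE (z : 'rV[R]_d) i :
  rank_in_blk blk z i = rank_in (beats z) [pred j | blk j == blk i] i.
Proof. by apply: eq_card => j; rewrite !inE. Qed.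

Lemma rank_in_blk_lt (z : 'rV[R]_d) i j : blk i = blk j -> beats z i j ->
  (rank_in_blk blk z i < rank_in_blk blk z j)%N.
Proof.
move=> eq_blk lt_ij; rewrite !rank_in_blkE eq_blk.
apply: (rank_in_lt (@beats_irr _ _ z) (@beats_trans _ _ z)) lt_ij.
by rewrite inE eq_blk.
Qed.

Lemma FLTZ (z : 'rV[R]_d) (c : R) i : c != 0 -> FLT blk a (c *: z) i = FLT blk a z i.
Proof.
move=> c_neq0; rewrite /FLT /rank_in_blk; congr (_ < _)%N.
by apply: eq_card => j; rewrite !inE beatsZ.
Qed.

Definition top_set (z : 'rV[R]_d) (k : 'I_B) : {set 'I_d} :=
  [set i | (blk i == k) && FLT blk a z i].

Lemma top_normE (z : 'rV[R]_d) :
  top_norm blk a z = \sum_(k < B) \sum_(i in top_set z k) `|z ord0 i|.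
Proof.
rewrite /top_norm (partition_big blk xpredT) //=; apply: eq_bigr => k _.
rewrite [RHS]big_mkcond [LHS]big_mkcond; apply: eq_bigr => i _; rewrite inE.
by case: (blk i == k); case: (FLT _ _ _ _); rewrite ?mulr1 ?mulr0 ?normr0.
Qed.

Lemma card_top_set (z : 'rV[R]_d) k :
  #|top_set z k| = count (fun r => r < nsel blk a k)%N (iota 0 (blk_size blk k)).
Proof.
set blk_k := [pred i | blk i == k].
have perm_ranks : perm_eq [seq rank_in_blk blk z i | i <- enum blk_k]
                          (iota 0 (blk_size blk k)).
  have -> : [seq rank_in_blk blk z i | i <- enum blk_k] =
            [seq rank_in (beats z) blk_k i | i <- enum blk_k].
    by apply/eq_in_map => i; rewrite mem_enum inE => /eqP blk_i; rewrite rank_in_blkE blk_i.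
  exact: perm_rank_in_iota (@beats_irr _ _ z) (@beats_trans _ _ z) (@beats_total _ _ z).
rewrite -(permP perm_ranks) count_map -size_filter cardE /enum_mem -filter_predI.
congr size; apply: eq_filter => i; rewrite !inE /= /FLT andbC.
by case: eqP => [->|]; rewrite ?andbF.
Qed.

Lemma top_set_dominates (z : 'rV[R]_d) k i j :
  i \in top_set z k -> blk j = k -> j \notin top_set z k -> `|z ord0 j| <= `|z ord0 i|.
Proof.
rewrite !inE => /andP[/eqP blk_i sel_i] blk_j; rewrite blk_j eqxx /= => unsel_j.
rewrite leNgt; apply/negP => lt_ij.
have beats_ji : beats z j i by rewrite /beats lt_ij.
have := rank_in_blk_lt (etrans blk_j (esym blk_i)) beats_ji.
by move: sel_i unsel_j; rewrite /FLT blk_i blk_j; lia.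
Qed.

Lemma sum_le_top_set (z : 'rV[R]_d) k (S : {set 'I_d}) :
  {subset S <= [pred j | blk j == k]} -> (#|S| <= #|top_set z k|)%N ->
  \sum_(i in S) `|z ord0 i| <= \sum_(i in top_set z k) `|z ord0 i|.
Proof.
move=> S_blk le_card; apply: ler_sum_exchange => // i j top_i S_j unsel_j.
by apply: top_set_dominates top_i _ unsel_j; apply/eqP/S_blk.
Qed.

Lemma nsel_gt0 k : 0 < a -> (0 < blk_size blk k)%N -> (0 < nsel blk a k)%N.
Proof.
by move=> a_gt0 size_gt0; rewrite /nsel absz_gt0 gt_eqF // ceil_gt0 mulr_gt0 ?ltr0n.
Qed.

Lemma top_set_card_gt0 (z : 'rV[R]_d) j : 0 < a -> (0 < #|top_set z (blk j)|)%N.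
Proof.
move=> a_gt0; have size_gt0 : (0 < blk_size blk (blk j))%N.
  by apply/card_gt0P; exists j; rewrite inE.
rewrite card_top_set; move: size_gt0 (nsel_gt0 a_gt0 size_gt0).
by case: (blk_size _ _) => // m _ /= ->.
Qed.

Lemma top_norm_ge0 (z : 'rV[R]_d) : 0 <= top_norm blk a z.
Proof. by apply: sumr_ge0 => i _; apply: normr_ge0. Qed.

Lemma top_norm_eq0 (z : 'rV[R]_d) : 0 < a -> top_norm blk a z = 0 -> z = 0.
Proof.
rewrite top_normE => a_gt0 norm0; apply/rowP => j; rewrite mxE.
have top0 : \sum_(i in top_set z (blk j)) `|z ord0 i| = 0.
  by apply: (psumr_eq0P _ norm0) => // k _; apply: sumr_ge0.
apply/eqP; rewrite -normr_le0 -top0.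
have -> : `|z ord0 j| = \sum_(i in [set j]) `|z ord0 i| by rewrite big_set1.
apply: sum_le_top_set; first by move=> i; rewrite !inE => /eqP ->.
by rewrite cards1 top_set_card_gt0.
Qed.

Lemma top_normZ (c : R) (z : 'rV[R]_d) : top_norm blk a (c *: z) = `|c| * top_norm blk a z.
Proof.
have [->|c_neq0] := eqVneq c 0.
  by rewrite normr0 mul0r; apply: big1 => i _; rewrite mxE !mul0r normr0.
by rewrite /top_norm mulr_sumr; apply: eq_bigr => i _; rewrite FLTZ // mxE -mulrA normrM.
Qed.

Lemma ler_top_normD (x y : 'rV[R]_d) :
  top_norm blk a (x + y) <= top_norm blk a x + top_norm blk a y.
Proof.
rewrite !top_normE -big_split; apply: ler_sum => k _ /=.
set S := top_set (x + y) k.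
have S_blk : {subset S <= [pred j | blk j == k]} by move=> i; rewrite inE => /andP[].
apply: (@le_trans _ _ (\sum_(i in S) (`|x ord0 i| + `|y ord0 i|))).
  by apply: ler_sum => i _; rewrite mxE ler_normD.
by rewrite big_split lerD // sum_le_top_set // !card_top_set.
Qed.

End TopSet.

Theorem proposition1 (R : realType) (d B : nat) (blk : 'I_d -> 'I_B) (a : R)
  (ha0 : 0 < a) (ha1 : a <= 1) :
  is_norm (top_norm blk a).
Proof.
split=> [x|x|c x|x y].
- exact: top_norm_ge0.
- exact: top_norm_eq0.
- exact: top_normZ.
- exact: ler_top_normD.
Qed.
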